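(* Let $\mathbf{IL}\mathsf X$ be a Horn logic and $\Gamma$ a finite set of formulas. If a systematic $\mathbf{IL}\mathsf X$-tableau for $\Gamma$ closes (every branch contains some $\sigma::A$ and $\sigma::\neg A$), then $\Gamma$ is $\mathbf{IL}\mathsf X$-unsatisfiable, i.e. there is no $\mathbf{IL}\mathsf X$-model $M$ and world $x$ of $M$ with $M,x\Vdash A$ for all $A\in\Gamma$.
   Context: Formulas: built from a countable set $\mathsf{Prop}$ of propositional variables by $\neg$, $\to$, unary $\Box$ and binary $\rhd$. $\mathbf{IL}$ is the modal logic with axioms all instances of propositional tautologies and the schemes $\Box(A\to B)\to(\Box A\to\Box B)$, $\Box(\Box A\to A)\to\Box A$, $\Box(A\to B)\to A\rhd B$, $(A\rhd B)\wedge(B\rhd C)\to A\rhd C$, $(A\rhd C)\wedge(B\rhd C)\to A\vee B\rhd C$, $A\rhd B\to(\Diamond A\to\Diamond B)$, $\Diamond A\rhd A$ ($\Diamond=\neg\Box\neg$), rules modus ponens and necessitation. An $\mathbf{IL}$-frame is $\langle W,R,S\rangle$ with $W\neq\emptyset$, $R$ transitive and Noetherian (no infinite chains $x_0Rx_1Rx_2\cdots$), $S$ ternary, $yS_xz$ meaning $(x,y,z)\in S$, each $S_x$ a reflexive transitive relation on $\{y:xRy\}$, and $xRyRz\Rightarrow yS_xz$. A model adds a valuation $V$; forcing standard for $\neg,\to$; $x\Vdash\Box A$ iff all $R$-successors force $A$; $x\Vdash A\rhd B$ iff for every $y$ with $xRy$, $y\Vdash A$ there is $z$ with $yS_xz$,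 $z\Vdash B$. $\mathbf{IL}\mathsf X$ is $\mathbf{IL}$ plus axiom schemes $\mathsf X$; it is Horn if there is a set $\mathcal C_{\mathsf X}$ of strict universal Horn sentences $\forall\cdots\forall(\varphi_1\wedge\dots\wedge\varphi_n\to\psi)$ ($n\ge0$, atomic $\varphi_i,\psi$) in the language $\{R,S\}$ such that an $\mathbf{IL}$-frame validates all theorems of $\mathbf{IL}\mathsf X$ iff it satisfies $\mathcal C_{\mathsf X}$; $\mathbf{IL}\mathsf X$-frames/models are those satisfying $\mathcal C_{\mathsf X}$. Labels: $0$; $\sigma Rn$ for a label $\sigma$, $n\in\mathbb N$; $\sigma S_\rho n$ for labels $\sigma,\rho$ with $\rho$ a strict non-empty prefix of $\sigma$. Extended formulas also allow unary operators $\Box_\rho$, $\rho$ a label. Labelled formula: $\sigma::A$. For a set $\Lambda$ of labels, $\mathbf R^\Lambda,\mathbf S^\Lambda$ are the least relations on $\Lambda$ with: (1) $\sigma,\sigma Rn\in\Lambda\Rightarrow\sigma\mathbf R\,\sigma Rn$; (2) $\mathbf R$ transitive; (3) $\sigma,\rho,\sigma S_\rho n\in\Lambda\Rightarrow\sigma\mathbf S_\rho\,\sigma S_\rho n$; (4) $\sigma\mathbf R\tau\Rightarrow\tau\mathbf S_\sigma\tau$; (5) $\rho\mathbf R\sigma\mathbf R\tau\Rightarrow\sigma\mathbf S_\rho\tau$; (6) $\sigma\mathbf S_\rho\tau\mathbf S_\rho\upsilon\Rightarrow\sigma\mathbf S_\rho\upsilon$; (7) $\sigma\mathbf S_\rho\tau\Rightarrow\rho\mathbf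 R\sigma,\rho\mathbf R\tau$; (8) $\langle\Lambda,\mathbf R^\Lambda,\mathbf S^\Lambda\rangle\models\mathcal C_{\mathsf X}$ (where $\sigma\mathbf S_\rho\tau$ means $(\rho,\sigma,\tau)\in\mathbf S^\Lambda$). For a branch $\mathcal B$, $\mathrm{lab}(\mathcal B)$ is the set of labels on it and relations refer to $\mathbf R^{\mathrm{lab}(\mathcal B)},\mathbf S^{\mathrm{lab}(\mathcal B)}$. A branch is closed if it contains $\sigma::A$ and $\sigma::\neg A$ for some $\sigma,A$, otherwise open. Systematic $\mathbf{IL}\mathsf X$-tableau for finite $\Gamma$: built in stages $T_0\subseteq T_1\subseteq\cdots$, nodes marked awake, asleep or finished. Stage 0: nodes $0::A$, $A\in\Gamma$, one below another, all awake. Stage $n+1$: choose an awake node $\sigma::A$ closest to the root (leftmost among ties). If $A$ is $p$ or $\neg p$ ($p\in\mathsf{Prop}$), mark it finished. Otherwise (new nodes marked awake; ''extend'' = append at the bottom): $\neg\neg B$: extend each open branch through it with $\sigma::B$; finished. $B\to C$: split each open branch through it, left $\sigma::\neg B$, right $\sigma::C$; finished. $\neg(B\to C)$: extend with $\sigma::B,\sigma::\neg C$; finished. $\Box B$: for each open branch $\mathcal B$ through it and each $\tau\in\mathrm{lab}(\mathcal B)$ with $\sigma\mathbf R\tau$, extend with $\tau::B$; asleep. $\neg\Box B$: for each open branch $\mathcal B$ through it, $n$ least with $\sigma Rn\notin\mathrm{lab}(\mathcal B)$, extend with $\sigma Rn::\neg B,\sigma Rn::\Box B$; finished; also mark awake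 every node $\tau::\Box D$, $\tau::D\rhd E$ on $\mathcal B$ with $\tau\mathbf R\,\sigma Rn$ and every $\tau::\Box_\kappa D$ on $\mathcal B$ with $\tau\mathbf S_\kappa\,\sigma Rn$. $\Box_\rho B$: for each branch $\mathcal B$ through it and each $\tau\in\mathrm{lab}(\mathcal B)$ with $\sigma\mathbf S_\rho\tau$, extend with $\tau::B$; asleep. $\neg\Box_\rho B$: for each open branch, $n$ least with $\sigma S_\rho n\notin\mathrm{lab}(\mathcal B)$, extend with $\sigma S_\rho n::\neg B,\sigma S_\rho n::\Box B$; finished; reawaken as in the $\neg\Box$ case with new label $\sigma S_\rho n$. $B\rhd C$: for each open branch $\mathcal B$ through it and each $\tau\in\mathrm{lab}(\mathcal B)$ with $\sigma\mathbf R\tau$, split, left $\tau::\neg B$, right $\tau::\neg\Box_\sigma\neg C$; asleep. $\neg(B\rhd C)$: for each open branch, $n$ least with $\sigma Rn\notin\mathrm{lab}(\mathcal B)$, extend with $\sigma Rn::B,\sigma Rn::\Box_\sigma\neg C,\sigma Rn::\Box\neg B$; finished; reawaken as in the $\neg\Box$ case. The systematic tableau is $\bigcup_iT_i$; it closes if all its branches are closed. *)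

From Stdlib Require Import List Arith PeanoNat.
Import ListNotations.

Inductive formula : Type :=
| Var : nat -> formula
| Neg : formula -> formula
| Imp : formula -> formula -> formula
| Box : formula -> formula
| Rhd : formula -> formula -> formula.

Definition And (A B : formula) : formula := Neg (Imp A (Neg B)).
Definition Or (A B : formula) : formula := Imp (Neg A) B.
Definition Dia (A : formula) : formula := Neg (Box (Neg A)).

Fixpoint subst (s : nat -> formula) (A : formula) : formula :=
  match A with
  | Var p => s p
  | Neg B => Neg (subst s B)
  | Imp B C => Imp (subst s B) (subst s C)
  | Box B => Box (subst s B)
  | Rhd B C => Rhd (subst s B) (subst s C)
  end.

(* propositional evaluation: variables, Box- and Rhd-formulas are atoms *)
Fixpoint peval (v : formula -> bool) (A : formula) : bool :=
  match A with
  | Neg B => negb (peval v B)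
  | Imp B C => implb (peval v B) (peval v C)
  | _ => v A
  end.

Definition tautology (A : formula) : Prop := forall v, peval v A = true.

(* Theorems of IL X; X is a set of axiom schemes, whose instances are
   all substitution instances of its members. *)
Inductive IL_thm (X : formula -> Prop) : formula -> Prop :=
| ax_taut A : tautology A -> IL_thm X A
| ax_K A B : IL_thm X (Imp (Box (Imp A B)) (Imp (Box A) (Box B)))
| ax_L A : IL_thm X (Imp (Box (Imp (Box A) A)) (Box A))
| ax_J1 A B : IL_thm X (Imp (Box (Imp A B)) (Rhd A B))
| ax_J2 A B C : IL_thm X (Imp (And (Rhd A B) (Rhd B C)) (Rhd A C))
| ax_J3 A B C : IL_thm X (Imp (And (Rhd A C) (Rhd B C)) (Rhd (Or A B) C))
| ax_J4 A B : IL_thm X (Imp (Rhd A B) (Imp (Dia A) (Dia B)))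
| ax_J5 A : IL_thm X (Rhd (Dia A) A)
| ax_X A s : X A -> IL_thm X (subst s A)
| r_MP A B : IL_thm X (Imp A B) -> IL_thm X A -> IL_thm X B
| r_Nec A : IL_thm X A -> IL_thm X (Box A).

(* IL-frames.  Sw x y z  means  y S_x z. *)
Record ILframe := {
  W : Type;
  Rw : W -> W -> Prop;
  Sw : W -> W -> W -> Prop;
  W_inhabited : inhabited W;
  R_trans : forall x y z, Rw x y -> Rw y z -> Rw x z;
  R_noeth : ~ (exists f : nat -> W, forall i, Rw (f i) (f (S i)));
  S_dom : forall x y z, Sw x y z -> Rw x y /\ Rw x z;
  S_refl : forall x y, Rw x y -> Sw x y y;
  S_trans : forall x y z u, Sw x y z -> Sw x z u -> Sw x y u;
  R_S : forall x y z, Rw x y -> Rw y z -> Sw x y z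
}.

Fixpoint forces (F : ILframe) (V : nat -> W F -> Prop) (x : W F) (A : formula)
  : Prop :=
  match A with
  | Var p => V p x
  | Neg B => ~ forces F V x B
  | Imp B C => forces F V x B -> forces F V x C
  | Box B => forall y, Rw F x y -> forces F V y B
  | Rhd B C => forall y, Rw F x y -> forces F V y B ->
                 exists z, Sw F x y z /\ forces F V z C
  end.

Definition validates_X (F : ILframe) (X : formula -> Prop) : Prop :=
  forall A, IL_thm X A -> forall (V : nat -> W F -> Prop) (x : W F), forces F V x A.

(* Strict universal Horn sentences in the language {R, S}.
   Variables are nats; HR i j is R(x_i,x_j); HS i j k is S(x_i,x_j,x_k),
   i.e. x_j S_{x_i} x_k. *)
Inductive hatom := HR (i j : nat) | HS (i j k : nat).
Record horn := { hbody : list hatom; hhead : hatom }.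

Definition atom_holds {T : Type} (R : T -> T -> Prop) (S : T -> T -> T -> Prop)
  (g : nat -> T) (a : hatom) : Prop :=
  match a with
  | HR i j => R (g i) (g j)
  | HS i j k => S (g i) (g j) (g k)
  end.

Definition horn_holds {T : Type} (D : T -> Prop) (R : T -> T -> Prop)
  (S : T -> T -> T -> Prop) (h : horn) : Prop :=
  forall g : nat -> T, (forall i, D (g i)) ->
    (forall a, In a (hbody h) -> atom_holds R S g a) -> atom_holds R S g (hhead h).

Definition frame_sat_C (F : ILframe) (C : horn -> Prop) : Prop :=
  forall h, C h -> horn_holds (fun _ => True) (Rw F) (Sw F) h.

Definition is_Horn (X : formula -> Prop) (C : horn -> Prop) : Prop :=
  forall F : ILframe, validates_X F X <-> frame_sat_C F C.

(* Labels: L0 = 0, LR s n = s R n, LS s r n = s S_r n. *)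
Inductive label : Type :=
| L0 : label
| LR : label -> nat -> label
| LS : label -> label -> nat -> label.

Inductive eformula : Type :=
| EVar : nat -> eformula
| ENeg : eformula -> eformula
| EImp : eformula -> eformula -> eformula
| EBox : eformula -> eformula
| EBoxL : label -> eformula -> eformula
| ERhd : eformula -> eformula -> eformula.

Fixpoint embed (A : formula) : eformula :=
  match A with
  | Var p => EVar p
  | Neg B => ENeg (embed B)
  | Imp B C => EImp (embed B) (embed C)
  | Box B => EBox (embed B)
  | Rhd B C => ERhd (embed B) (embed C)
  end.

Definition lformula : Type := (label * eformula)%type.

(* ground atoms over labels: GR s t = s R t ; GS r s t = s S_r t *)
Inductive gatom := GR (s t : label) | GS (r s t : label).

Definition ginst (g : nat -> label) (a : hatom) : gatom :=
  match a with
  | HR i j => GR (g i) (g j)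
  | HS i j k => GS (g i) (g j) (g k)
  end.

Inductive LRel (C : horn -> Prop) (L : label -> Prop) : gatom -> Prop :=
| lr1 s n : L s -> L (LR s n) -> LRel C L (GR s (LR s n))
| lr2 s t u : LRel C L (GR s t) -> LRel C L (GR t u) -> LRel C L (GR s u)
| lr3 s r n : L s -> L r -> L (LS s r n) -> LRel C L (GS r s (LS s r n))
| lr4 s t : LRel C L (GR s t) -> LRel C L (GS s t t)
| lr5 r s t : LRel C L (GR r s) -> LRel C L (GR s t) -> LRel C L (GS r s t)
| lr6 r s t u : LRel C L (GS r s t) -> LRel C L (GS r t u) -> LRel C L (GS r s u)
| lr7a r s t : LRel C L (GS r s t) -> LRel C L (GR r s)
| lr7b r s t : LRel C L (GS r s t) -> LRel C L (GR r t)
| lr8 h g : C h -> (forall i, L (g i)) ->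
    (forall a, In a (hbody h) -> LRel C L (ginst g a)) ->
    LRel C L (ginst g (hhead h)).

Definition LabR C L s t : Prop := LRel C L (GR s t).
Definition LabS C L r s t : Prop := LRel C L (GS r s t).

(* Tableau trees.  A tree maps node addresses (list of child indices,
   root = []) to (labelled formula, status). *)
Inductive status := Awake | Asleep | Finished.

Definition tree : Type := list nat -> option (lformula * status).

Definition prefix (a b : list nat) : Prop := exists c, b = a ++ c.
Definition defined (T : tree) (a : list nat) : Prop := exists x, T a = Some x.
Definition formula_at (T : tree) (a : list nat) (f : lformula) : Prop :=
  exists st, T a = Some (f, st).
Definition awake (T : tree) (a : list nat) : Prop := exists f, T a = Some (f, Awake).

(* a branch of a finite stage tree is identified with its leaf *)
Definition leaf (T : tree) (l : list nat) : Prop := defined T l /\ T (l ++ [0]) = None.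

Definition lab (T : tree) (l : list nat) (s : label) : Prop :=
  exists a e, prefix a l /\ formula_at T a (s, e).

Definition closed_leaf (T : tree) (l : list nat) : Prop :=
  exists a b s e, prefix a l /\ prefix b l /\
    formula_at T a (s, e) /\ formula_at T b (s, ENeg e).

Fixpoint lex_lt (a b : list nat) : Prop :=
  match a, b with
  | [], _ :: _ => True
  | x :: a', y :: b' => x < y \/ (x = y /\ lex_lt a' b')
  | _, _ => False
  end.
Definition node_before (a b : list nat) : Prop :=
  length a < length b \/ (length a = length b /\ lex_lt a b).
Definition chosen (T : tree) (n : list nat) : Prop :=
  awake T n /\ forall m, awake T m -> ~ node_before m n.

(* Extensions appended at the bottom of a branch: a list of levels; Ext f
   appends one node, Split f g splits every current end into f | g. *)
Inductive level := Ext (f : lformula) | Split (f g : lformula).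
Definition comp (l : level) (i : nat) : option lformula :=
  match l, i with
  | Ext f, 0 => Some f
  | Split f _, 0 => Some f
  | Split _ g, 1 => Some g
  | _, _ => None
  end.
Fixpoint frag_node (ls : list level) (r : list nat) : option lformula :=
  match ls, r with
  | l :: ls', i :: r' =>
      match comp l i with
      | None => None
      | Some f => match r' with [] => Some f | _ => frag_node ls' r' end
      end
  | _, _ => None
  end.

Definition enum_of (P : label -> Prop) (ts : list label) : Prop :=
  NoDup ts /\ forall t, In t ts <-> P t.

Definition least_fresh (P : label -> Prop) (mk : nat -> label) (k : nat) : Prop :=
  ~ P (mk k) /\ forall m, m < k -> P (mk m).

Definition leaf_levels (C : horn -> Prop) (T : tree) (l : list nat) (s : label)
  (A : eformula) (ls : list level) : Prop :=
  let L := lab T l in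
  match A with
  | EVar _ => ls = []
  | ENeg (EVar _) => ls = []
  | ENeg (ENeg B) => ls = [Ext (s, B)]
  | EImp B D => ls = [Split (s, ENeg B) (s, D)]
  | ENeg (EImp B D) => ls = [Ext (s, B); Ext (s, ENeg D)]
  | EBox B => exists ts, enum_of (fun t => L t /\ LabR C L s t) ts /\
                 ls = map (fun t => Ext (t, B)) ts
  | ENeg (EBox B) => exists k, least_fresh L (LR s) k /\
                 ls = [Ext (LR s k, ENeg B); Ext (LR s k, EBox B)]
  | EBoxL r B => exists ts, enum_of (fun t => L t /\ LabS C L r s t) ts /\
                 ls = map (fun t => Ext (t, B)) ts
  | ENeg (EBoxL r B) => exists k, least_fresh L (LS s r) k /\
                 ls = [Ext (LS s r k, ENeg B); Ext (LS s r k, EBox B)]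
  | ERhd B D => exists ts, enum_of (fun t => L t /\ LabR C L s t) ts /\
                 ls = map (fun t => Split (t, ENeg B) (t, ENeg (EBoxL s (ENeg D)))) ts
  | ENeg (ERhd B D) => exists k, least_fresh L (LR s) k /\
                 ls = [Ext (LR s k, B); Ext (LR s k, EBoxL s (ENeg D));
                       Ext (LR s k, EBox (ENeg B))]
  end.

Definition new_label (T : tree) (l : list nat) (s : label) (A : eformula)
  (v : label) : Prop :=
  let L := lab T l in
  match A with
  | ENeg (EBox _) => exists k, least_fresh L (LR s) k /\ v = LR s k
  | ENeg (ERhd _ _) => exists k, least_fresh L (LR s) k /\ v = LR s k
  | ENeg (EBoxL r _) => exists k, least_fresh L (LS s r) k /\ v = LS s r k
  | _ => False
  end.

Definition status_after (A : eformula) : status :=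
  match A with
  | EBox _ => Asleep
  | EBoxL _ _ => Asleep
  | ERhd _ _ => Asleep
  | _ => Finished
  end.

(* the Box_rho rule acts on every branch through the node, the others on
   every open branch through it *)
Definition all_branches (A : eformula) : Prop :=
  match A with EBoxL _ _ => True | _ => False end.

Definition processed (T : tree) (n : list nat) (A : eformula) (l : list nat) : Prop :=
  leaf T l /\ prefix n l /\ (all_branches A \/ ~ closed_leaf T l).

Definition wake_cond (C : horn -> Prop) (L' : label -> Prop) (v : label)
  (f : lformula) : Prop :=
  match f with
  | (t, EBox _) => LabR C L' t v
  | (t, ERhd _ _) => LabR C L' t v
  | (t, EBoxL k _) => LabS C L' k t v
  | _ => False
  end.

Definition reawake (C : horn -> Prop) (T : tree) (n : list nat) (s : label)
  (A : eformula) (a : list nat) : Prop :=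
  exists l v f, processed T n A l /\ prefix a l /\ new_label T l s A v /\
    formula_at T a f /\ wake_cond C (fun t => lab T l t \/ t = v) v f.

(* One stage of the systematic construction (choices: the order in which
   the labels tau are enumerated in the Box, Box_rho and Rhd rules). *)
Definition step (C : horn -> Prop) (T T' : tree) : Prop :=
  ((forall a, ~ awake T a) /\ forall a, T' a = T a) \/
  exists (n : list nat) (s : label) (A : eformula) (fr : list nat -> list level),
    chosen T n /\ T n = Some ((s, A), Awake) /\
    (forall l, processed T n A l -> leaf_levels C T l s A (fr l)) /\
    (forall a f st, T a = Some (f, st) ->
       exists st', T' a = Some (f, st') /\
         (a = n -> st' = status_after A) /\
         (a <> n -> (reawake C T n s A a -> st' = Awake) /\
                    (~ reawake C T n s A a -> st' = st))) /\
    (forall l r, processed T n A l -> r <> [] ->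
       T' (l ++ r) = option_map (fun f => (f, Awake)) (frag_node (fr l) r)) /\
    (forall a, T a = None ->
       (forall l r, processed T n A l -> r <> [] -> a <> l ++ r) -> T' a = None).

Definition init_tree (G : list formula) : tree := fun a =>
  if forallb (fun x => Nat.eqb x 0) a then
    match nth_error G (length a) with
    | Some A => Some ((L0, embed A), Awake)
    | None => None
    end
  else None.

Definition systematic_tableau (C : horn -> Prop) (G : list formula)
  (T : nat -> tree) : Prop :=
  T 0 = init_tree G /\ forall i, step C (T i) (T (S i)).

(* The systematic tableau is the union of the stages. *)
Definition union_defined (T : nat -> tree) (a : list nat) : Prop :=
  exists i, defined (T i) a.
Definition union_formula_at (T : nat -> tree) (a : list nat) (f : lformula) : Prop :=
  exists i, formula_at (T i) a f.

(* branches of the union: maximal chains of nodes (possibly infinite) *)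
Definition union_branch (T : nat -> tree) (P : list nat -> Prop) : Prop :=
  (forall a, P a -> union_defined T a) /\
  (forall a b, P b -> prefix a b -> P a) /\
  (forall a b, P a -> P b -> prefix a b \/ prefix b a) /\
  (forall a, union_defined T a -> (forall b, P b -> prefix a b \/ prefix b a) -> P a).

Definition branch_closed (T : nat -> tree) (P : list nat -> Prop) : Prop :=
  exists a b s e, P a /\ P b /\
    union_formula_at T a (s, e) /\ union_formula_at T b (s, ENeg e).

Definition tableau_closes (T : nat -> tree) : Prop :=
  forall P, union_branch T P -> branch_closed T P.

(* Given a model of [Gamma] at [x], every stage of the
   systematic tableau has a branch together with an interpretation of its labels as
   worlds that makes all its labelled formulas true and respects the creation of
   labels; the relations [R^Lam], [S^Lam] are then sound in the model, closure
   condition (8) being exactly the Horn conditions the model satisfies.  The rules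
   creating a label for [~Box B], [~Box_r B] or [~(B |> D)] interpret it by an
   R-maximal witness (Noetherianity), which also makes the accompanying [Box B],
   resp. [Box ~B], true.  Each stage's branch extends the previous one, so their
   union is a branch of the full tableau without contradiction. *)

From Stdlib Require Import List PeanoNat Lia Classical ClassicalEpsilon.
Import ListNotations.

Lemma prefix_refl a : prefix a a.
Proof. exists []; rewrite app_nil_r; reflexivity. Qed.

Lemma prefix_trans a b c : prefix a b -> prefix b c -> prefix a c.
Proof. intros [x ->] [y ->]; exists (x ++ y); rewrite app_assoc; reflexivity. Qed.

Lemma prefix_app a b : prefix a (a ++ b).
Proof. exists b; reflexivity. Qed.

Lemma prefix_app_inv a l r : prefix a (l ++ r) ->
  prefix a l \/ exists r1 r2, r1 <> [] /\ a = l ++ r1 /\ r = r1 ++ r2.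
Proof.
  intros [c Hc]. apply app_eq_app in Hc.
  destruct Hc as [x [[-> _]|[-> ->]]]; [left; apply prefix_app|].
  destruct x as [|y x].
  - left; rewrite app_nil_r; apply prefix_refl.
  - right; exists (y :: x), c; repeat split; discriminate.
Qed.

Lemma prefix_total a b c : prefix a c -> prefix b c -> prefix a b \/ prefix b a.
Proof.
  intros [x Hx] [y Hy]. rewrite Hx in Hy. apply app_eq_app in Hy.
  destruct Hy as [z [[H1 H2]|[H1 H2]]]; [right|left]; exists z; auto.
Qed.

Fixpoint frag_path (P : lformula -> Prop) (ls : list level) (r : list nat) : Prop :=
  match ls, r with
  | [], [] => True
  | lv :: ls', i :: r' => exists fm, comp lv i = Some fm /\ P fm /\ frag_path P ls' r'
  | _, _ => False
  end.

Lemma frag_path_node P ls r r1 r2 : frag_path P ls r -> r = r1 ++ r2 -> r1 <> [] ->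
  exists fm, frag_node ls r1 = Some fm /\ P fm.
Proof.
  revert r r1; induction ls as [|lv ls IH]; intros [|i r] r1 H E N; simpl in H;
    try contradiction.
  - destruct r1; [congruence|discriminate].
  - destruct H as [fm [Hc [Hp Hr]]]. destruct r1 as [|j [|k r1]]; [congruence| |];
      simpl in E; injection E as -> E; simpl; rewrite Hc; eauto.
    apply (IH r (k :: r1) Hr E). discriminate.
Qed.

Lemma frag_path_end P ls r c : frag_path P ls r -> c <> [] -> frag_node ls (r ++ c) = None.
Proof.
  revert r; induction ls as [|lv ls IH]; intros [|i r] H N; simpl in H; try contradiction.
  - destruct c; reflexivity.
  - destruct H as [fm [Hc [_ Hr]]]. simpl. rewrite Hc.
    destruct (r ++ c) eqn:E.
    + apply app_eq_nil in E; tauto.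
    + rewrite <- E. apply IH; auto.
Qed.

Lemma frag_path_map P (g : label -> level) ts :
  (forall t, In t ts -> exists i fm, comp (g t) i = Some fm /\ P fm) ->
  exists r, frag_path P (map g ts) r.
Proof.
  induction ts as [|t ts IH]; intros H.
  - exists []; exact I.
  - destruct (H t (or_introl eq_refl)) as [i [fm [H1 H2]]].
    destruct IH as [r Hr]; [intros; apply H; right; auto|].
    exists (i :: r); simpl; eauto.
Qed.

Lemma frag_node_prefix ls r1 r2 : r1 <> [] ->
  frag_node ls (r1 ++ r2) <> None -> frag_node ls r1 <> None.
Proof.
  revert r1; induction ls as [|lv ls IH]; intros [|i r1] N H; simpl in *; try congruence.
  destruct (comp lv i); [|congruence].
  destruct r1 as [|k r1]; [congruence|].
  apply (IH (k :: r1)); [discriminate|auto].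
Qed.

Lemma frag_node_child0 ls r1 c : c <> [] ->
  frag_node ls (r1 ++ c) <> None -> frag_node ls (r1 ++ [0]) <> None.
Proof.
  revert ls; induction r1 as [|i r1 IH]; intros [|lv ls] N H; simpl in *; try congruence.
  - destruct c as [|j c]; [congruence|]. destruct lv; simpl; discriminate.
  - destruct (comp lv i); [|congruence].
    destruct (r1 ++ c) eqn:E; [apply app_eq_nil in E; tauto|].
    destruct (r1 ++ [0]) eqn:E2; [apply app_eq_nil in E2; destruct E2; discriminate|].
    apply IH; assumption.
Qed.

Definition prefix_closed (T : tree) : Prop :=
  forall a b, defined T (a ++ b) -> defined T a.

Definition child0_closed (T : tree) : Prop :=
  forall a c, c <> [] -> defined T (a ++ c) -> defined T (a ++ [0]).

Definition extends (T T' : tree) : Prop :=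
  forall a fm st, T a = Some (fm, st) -> exists st', T' a = Some (fm, st').

Definition grafted (T' : tree) (l : list nat) (ls : list level) : Prop :=
  forall r, r <> [] -> T' (l ++ r) = option_map (fun f => (f, Awake)) (frag_node ls r).

Definition only_grafts (T T' : tree) (Pr : list nat -> Prop) : Prop :=
  forall a, T a = None -> (forall l r, Pr l -> r <> [] -> a <> l ++ r) -> T' a = None.

Section Graft.

Variables (T T' : tree) (Pr : list nat -> Prop) (fr : list nat -> list level).
Hypothesis Pr_leaf : forall l, Pr l -> leaf T l.
Hypothesis T_ext : extends T T'.
Hypothesis T'_grafted : forall l, Pr l -> grafted T' l (fr l).
Hypothesis T'_only : only_grafts T T' Pr.

Lemma extends_defined a : defined T a -> defined T' a.
Proof. intros [[fm st] H]. destruct (T_ext _ _ _ H) as [st' H']. eexists; eauto. Qed.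

Lemma graft_defined l r : Pr l -> r <> [] -> frag_node (fr l) r <> None ->
  defined T' (l ++ r).
Proof.
  intros Pl Nr Hf. unfold defined. rewrite T'_grafted by auto.
  destruct (frag_node (fr l) r); [eexists; reflexivity|congruence].
Qed.

Lemma graft_defined_inv a : defined T' a ->
  defined T a \/ exists l r, Pr l /\ r <> [] /\ a = l ++ r /\ frag_node (fr l) r <> None.
Proof.
  intros [x Hx]. destruct (T a) eqn:E; [left; eexists; eauto|right].
  apply NNPP; intro Hc. enough (T' a = None) by congruence.
  apply T'_only; auto. intros l r Pl Nr ->. apply Hc. exists l, r; repeat split; auto.
  rewrite T'_grafted in Hx by auto. destruct (frag_node (fr l) r); discriminate.
Qed.

Lemma graft_prefix_closed : prefix_closed T -> prefix_closed T'.
Proof.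
  intros HPC a b Hab.
  destruct (graft_defined_inv _ Hab) as [H|[l [r [Pl [Nr [Ea Hf]]]]]].
  - apply extends_defined, (HPC a b H).
  - assert (Hpr : prefix a (l ++ r)) by (rewrite <- Ea; apply prefix_app).
    destruct (prefix_app_inv _ _ _ Hpr) as [[d Ed]|[r1 [r2 [N1 [-> ->]]]]].
    + apply extends_defined, (HPC a d). rewrite <- Ed. apply Pr_leaf; auto.
    + apply graft_defined; auto. apply frag_node_prefix with r2; auto.
Qed.

Lemma graft_child0_closed : child0_closed T -> child0_closed T'.
Proof.
  intros HJ a c Nc Hac.
  destruct (graft_defined_inv _ Hac) as [H|[l [r [Pl [Nr [Ea Hf]]]]]].
  - apply extends_defined, (HJ a c Nc H).
  - assert (Hpr : prefix a (l ++ r)) by (rewrite <- Ea; apply prefix_app).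
    destruct (prefix_app_inv _ _ _ Hpr) as [[[|y d] Ed]|[r1 [r2 [N1 [-> ->]]]]].
    + rewrite app_nil_r in Ed. subst l. apply graft_defined; [auto|discriminate|].
      apply (frag_node_child0 _ [] r); auto.
    + apply extends_defined, (HJ a (y :: d)); [discriminate|].
      rewrite <- Ed. apply Pr_leaf; auto.
    + rewrite <- !app_assoc in Ea. do 2 apply app_inv_head in Ea. subst r2.
      rewrite <- app_assoc. apply graft_defined; auto.
      * destruct r1; simpl; discriminate.
      * apply frag_node_child0 with c; auto.
Qed.

Lemma ungrafted_leaf l : child0_closed T -> leaf T l -> ~ Pr l -> leaf T' l.
Proof.
  intros HJ [Hd Hn] Np. split; [apply extends_defined; auto|].
  apply T'_only; auto. intros l2 r P2 Nr E.
  assert (Hpr : prefix l2 (l ++ [0])) by (rewrite E; apply prefix_app).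
  destruct (prefix_app_inv _ _ _ Hpr) as [[[|y d] Ed]|[[|z r1] [r2 [N1 [E1 E2]]]]].
  - rewrite app_nil_r in Ed; subst; auto.
  - destruct (Pr_leaf l2 P2) as [_ H2].
    destruct (HJ l2 (y :: d)) as [x Hx]; [discriminate| |congruence].
    rewrite <- Ed; auto.
  - congruence.
  - injection E2 as <- E2. destruct r1; [|discriminate]. subst l2.
    destruct (Pr_leaf _ P2) as [[x Hx] _]. congruence.
Qed.

End Graft.

Fixpoint elabels (e : eformula) (u : label) : Prop :=
  match e with
  | EVar _ => False
  | ENeg B | EBox B => elabels B u
  | EImp B D | ERhd B D => elabels B u \/ elabels D u
  | EBoxL r B => u = r \/ elabels B u
  end.

Fixpoint eforces (M : ILframe) (V : nat -> W M -> Prop) (f : label -> W M) (w : W M)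
  (e : eformula) : Prop :=
  match e with
  | EVar p => V p w
  | ENeg B => ~ eforces M V f w B
  | EImp B D => eforces M V f w B -> eforces M V f w D
  | EBox B => forall y, Rw M w y -> eforces M V f y B
  | EBoxL r B => forall z, Sw M (f r) w z -> eforces M V f z B
  | ERhd B D => forall y, Rw M w y -> eforces M V f y B ->
                  exists z, Sw M w y z /\ eforces M V f z D
  end.

Lemma eforces_agree M V f f' e : (forall u, elabels e u -> f u = f' u) ->
  forall w, eforces M V f w e <-> eforces M V f' w e.
Proof.
  induction e; simpl; intros H w.
  - tauto.
  - rewrite IHe; tauto.
  - rewrite IHe1, IHe2; auto; tauto.
  - split; intros; apply IHe; auto.
  - rewrite (H l (or_introl eq_refl)). split; intros; apply IHe; auto.
  - split; intros H1 y Hy Hb;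
      [rewrite <- IHe1 in Hb by auto|rewrite IHe1 in Hb by auto];
      destruct (H1 y Hy Hb) as [z [Hz Hd]]; exists z; split; auto; apply IHe2; auto.
Qed.

Lemma eforces_embed M V f A w : eforces M V f w (embed A) <-> forces M V w A.
Proof.
  revert w; induction A; simpl; intros w.
  - tauto.
  - rewrite IHA; tauto.
  - rewrite IHA1, IHA2; tauto.
  - split; intros; apply IHA; auto.
  - split; intros H1 y Hy Hb; [rewrite <- IHA1 in Hb|rewrite IHA1 in Hb];
      destruct (H1 y Hy Hb) as [z [Hz Hd]]; exists z; split; auto; apply IHA2; auto.
Qed.

Lemma elabels_embed A u : ~ elabels (embed A) u.
Proof. induction A; simpl; tauto. Qed.

Definition respects_creation (M : ILframe) (L Lp : label -> Prop) (f : label -> W M) : Prop :=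
  forall t, L t ->
    match t with
    | L0 => True
    | LR s _ => Lp s /\ Rw M (f s) (f t)
    | LS s r _ => Lp s /\ Lp r /\ Sw M (f r) (f s) (f t)
    end.

Definition gatom_holds (M : ILframe) (f : label -> W M) (a : gatom) : Prop :=
  match a with
  | GR s t => Rw M (f s) (f t)
  | GS r s t => Sw M (f r) (f s) (f t)
  end.

Lemma LRel_sound M C L Lp f : frame_sat_C M C -> respects_creation M L Lp f ->
  forall a, LRel C L a -> gatom_holds M f a.
Proof.
  intros Hsat Hf a H. induction H; simpl in *.
  - apply (Hf _ H0).
  - eapply R_trans; eauto.
  - apply (Hf _ H1).
  - apply S_refl; auto.
  - apply R_S; auto.
  - eapply S_trans; eauto.
  - apply (S_dom _ _ _ _ IHLRel).
  - apply (S_dom _ _ _ _ IHLRel).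
  - assert (E : forall a, atom_holds (Rw M) (Sw M) (fun i => f (g i)) a <->
                          gatom_holds M f (ginst g a))
      by (intros []; simpl; tauto).
    apply E, (Hsat h H (fun i => f (g i)) (fun _ => I)).
    intros a Ha. apply E, H2; auto.
Qed.

Lemma noetherian_maximal (M : ILframe) (Q : W M -> Prop) z0 : Q z0 ->
  exists z, Q z /\ forall z', Rw M z z' -> ~ Q z'.
Proof.
  intros H0. apply NNPP; intro Hn.
  assert (Hs : forall z, Q z -> exists z', Rw M z z' /\ Q z').
  { intros z Hz. apply NNPP; intro Hc. apply Hn. exists z; split; auto.
    intros z' Hr Hq. apply Hc; eauto. }
  set (next := fun z => epsilon (inhabits z0) (fun z' => Rw M z z' /\ Q z')).
  assert (Hnext : forall z, Q z -> Rw M z (next z) /\ Q (next z))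
    by (intros z Hz; apply (epsilon_spec (inhabits z0) (fun z' => Rw M z z' /\ Q z')), Hs, Hz).
  assert (HQ : forall n, Q (Nat.iter n next z0))
    by (induction n; simpl; [auto|apply Hnext; auto]).
  apply (R_noeth M). exists (fun n => Nat.iter n next z0). intros i. apply Hnext, HQ.
Qed.

Section Witnesses.

Variables (M : ILframe) (V : nat -> W M -> Prop) (f : label -> W M).

Lemma neg_box_witness w B : ~ eforces M V f w (EBox B) ->
  exists y, Rw M w y /\ ~ eforces M V f y B /\ forall z, Rw M y z -> eforces M V f z B.
Proof.
  intros Hn.
  assert (Ex : exists y, Rw M w y /\ ~ eforces M V f y B).
  { apply NNPP; intro Hc; apply Hn; intros y Hy; apply NNPP; intro Hb; apply Hc; eauto. }
  destruct Ex as [y0 Hy0].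
  destruct (noetherian_maximal M (fun y => Rw M w y /\ ~ eforces M V f y B) y0 Hy0)
    as [y [[Hwy HyB] Hmax]].
  exists y; repeat split; auto.
  intros z Hz. apply NNPP; intro Hb. apply (Hmax z Hz). split; auto. eapply R_trans; eauto.
Qed.

Lemma neg_boxl_witness r w B : ~ eforces M V f w (EBoxL r B) ->
  exists z, Sw M (f r) w z /\ ~ eforces M V f z B /\
    forall u, Rw M z u -> eforces M V f u B.
Proof.
  intros Hn.
  assert (Ex : exists z, Sw M (f r) w z /\ ~ eforces M V f z B).
  { apply NNPP; intro Hc; apply Hn; intros y Hy; apply NNPP; intro Hb; apply Hc; eauto. }
  destruct Ex as [z0 Hz0].
  destruct (noetherian_maximal M (fun z => Sw M (f r) w z /\ ~ eforces M V f z B) z0 Hz0)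
    as [z [[Hwz HzB] Hmax]].
  exists z; repeat split; auto.
  intros u Hu. apply NNPP; intro Hb. apply (Hmax u Hu). split; auto.
  eapply S_trans; [exact Hwz|]. apply R_S; auto. apply (S_dom _ _ _ _ Hwz).
Qed.

Lemma neg_rhd_witness w B D : ~ eforces M V f w (ERhd B D) ->
  exists y, Rw M w y /\ eforces M V f y B /\
    (forall z, Sw M w y z -> ~ eforces M V f z D) /\
    forall z, Rw M y z -> ~ eforces M V f z B.
Proof.
  intros Hn.
  set (Q := fun y => Rw M w y /\ eforces M V f y B /\
                     forall z, Sw M w y z -> ~ eforces M V f z D).
  assert (Ex : exists y, Q y).
  { apply NNPP; intro Hc; apply Hn; intros y Hy HB; apply NNPP; intro Hz; apply Hc.
    exists y; repeat split; auto. intros z Hz1 Hz2; apply Hz; eauto. }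
  destruct Ex as [y0 Hy0].
  destruct (noetherian_maximal M Q y0 Hy0) as [y [[Hwy [HyB HyD]] Hmax]].
  exists y; repeat split; auto.
  intros z Hz Hb. apply (Hmax z Hz). split; [eapply R_trans; eauto|split; auto].
  intros u Hu. apply HyD. eapply S_trans; [|exact Hu]. apply R_S; auto.
Qed.

End Witnesses.

Record realizes (M : ILframe) (V : nat -> W M -> Prop) (T : tree) (l : list nat)
  (f : label -> W M) : Prop := {
  realizes_leaf : leaf T l;
  realizes_true : forall a t e, prefix a l -> formula_at T a (t, e) ->
    eforces M V f (f t) e;
  realizes_labels : forall a t e, prefix a l -> formula_at T a (t, e) ->
    forall u, elabels e u -> lab T l u;
  realizes_creation : respects_creation M (lab T l) (lab T l) f }.

Section Extension.

Variables (M : ILframe) (V : nat -> W M -> Prop) (T T' : tree) (l r : list nat).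
Variables (f f' : label -> W M) (N : label -> Prop).
Hypothesis T_pc : prefix_closed T.
Hypothesis T_real : realizes M V T l f.
Hypothesis T_ext : extends T T'.
Hypothesis new_nodes : forall r1 r2, r = r1 ++ r2 -> r1 <> [] ->
  exists fm st, T' (l ++ r1) = Some (fm, st) /\
    (lab T l (fst fm) \/ N (fst fm)) /\ (forall u, elabels (snd fm) u -> lab T l u) /\
    eforces M V f' (f' (fst fm)) (snd fm).

Lemma extension_node_inv a fm : prefix a (l ++ r) -> formula_at T' a fm ->
  (prefix a l /\ formula_at T a fm) \/
  ((lab T l (fst fm) \/ N (fst fm)) /\ (forall u, elabels (snd fm) u -> lab T l u) /\
   eforces M V f' (f' (fst fm)) (snd fm)).
Proof.
  intros Ha [st Hst].
  destruct (prefix_app_inv _ _ _ Ha) as [[d Ed]|[r1 [r2 [N1 [-> E2]]]]].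
  - left. split; [exists d; auto|].
    destruct (T_pc a d) as [[fm0 st0] H0]; [rewrite <- Ed; apply T_real|].
    destruct (T_ext _ _ _ H0) as [st' H']. rewrite H' in Hst. injection Hst as -> ->.
    exists st0; auto.
  - right. destruct (new_nodes r1 r2 E2 N1) as [fm1 [st1 [H1 HP]]].
    rewrite H1 in Hst. injection Hst as -> ->. auto.
Qed.

Lemma extension_lab_inv t : lab T' (l ++ r) t -> lab T l t \/ N t.
Proof.
  intros [a [e [Ha Hf]]].
  destruct (extension_node_inv a _ Ha Hf) as [[H1 H2]|[H1 _]]; [left; exists a, e|]; auto.
Qed.

Lemma extension_lab t : lab T l t -> lab T' (l ++ r) t.
Proof.
  intros [a [e [Ha [st Hf]]]]. destruct (T_ext _ _ _ Hf) as [st' H'].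
  exists a, e; split; [eapply prefix_trans; [exact Ha|apply prefix_app]|exists st'; auto].
Qed.

Hypothesis f'_agrees : forall u, lab T l u -> f' u = f u.
Hypothesis f'_creation : respects_creation M N (lab T l) f'.

Lemma realizes_extension : leaf T' (l ++ r) -> realizes M V T' (l ++ r) f'.
Proof.
  destruct T_real as [_ Htrue Hlabels Hcreat].
  intros Hleaf'. split; [exact Hleaf'| | |].
  - intros a t e Ha Hf.
    destruct (extension_node_inv a _ Ha Hf) as [[H1 H2]|[_ [_ H]]]; [|exact H].
    rewrite f'_agrees by (destruct H2 as [st H2]; exists a, e; split; [|exists st]; auto).
    apply (eforces_agree M V f f'); [|eapply Htrue; eauto].
    intros u Hu. symmetry. apply f'_agrees. eapply Hlabels; eauto.
  - intros a t e Ha Hf u Hu. apply extension_lab.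
    destruct (extension_node_inv a _ Ha Hf) as [[H1 H2]|[_ [H _]]]; [eapply Hlabels|apply H];
      eauto.
  - intros t Ht. destruct (extension_lab_inv t Ht) as [H|H].
    + pose proof (Hcreat t H) as Hb. destruct t as [|s n|s q n]; auto.
      * destruct Hb as [Hs Hr]. split; [apply extension_lab; auto|].
        rewrite !f'_agrees; auto.
      * destruct Hb as [Hs [Hq Hr]].
        split; [apply extension_lab; auto|split; [apply extension_lab; auto|]].
        rewrite !f'_agrees; auto.
    + pose proof (f'_creation t H) as Hb. destruct t as [|s n|s q n]; auto.
      * destruct Hb as [Hs Hr]; split; [apply extension_lab|]; auto.
      * destruct Hb as [Hs [Hq Hr]]; repeat split; try apply extension_lab; auto.
Qed.

End Extension.

Definition realizable_below (M : ILframe) (V : nat -> W M -> Prop) (T : tree)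
  (l : list nat) : Prop :=
  exists l' f', realizes M V T l' f' /\ prefix l l'.

Definition label_eq_dec (x y : label) : {x = y} + {x <> y}.
Proof. decide equality; apply Nat.eq_dec. Defined.

Lemma grafted_leaf P T T' l ls r : defined T l -> extends T T' -> grafted T' l ls ->
  frag_path P ls r -> leaf T' (l ++ r).
Proof.
  intros [[fm st] Hd] Hext Hg Hr. split.
  - destruct r as [|i r].
    + rewrite app_nil_r. destruct (Hext _ _ _ Hd) as [st' H']; eexists; eauto.
    + destruct (frag_path_node _ _ _ (i :: r) [] Hr (eq_sym (app_nil_r _)))
        as [fm1 [H1 _]]; [discriminate|].
      red. rewrite Hg, H1 by discriminate. eexists; reflexivity.
  - rewrite <- app_assoc, Hg by (destruct r; discriminate).
    rewrite (frag_path_end _ _ _ _ Hr); [reflexivity|discriminate].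
Qed.

Section GraftRealizes.

Variables (M : ILframe) (V : nat -> W M -> Prop) (T T' : tree) (l : list nat).
Variable f : label -> W M.
Hypothesis T_pc : prefix_closed T.
Hypothesis T_real : realizes M V T l f.
Hypothesis T_ext : extends T T'.

Definition old_node_true (fm : lformula) : Prop :=
  lab T l (fst fm) /\ (forall u, elabels (snd fm) u -> lab T l u) /\
  eforces M V f (f (fst fm)) (snd fm).

Lemma realizes_graft_old ls : grafted T' l ls ->
  (exists r, frag_path old_node_true ls r) -> realizable_below M V T' l.
Proof.
  intros Hg [r Hr]. exists (l ++ r), f. split; [|apply prefix_app].
  apply (realizes_extension M V T T' l r f f (fun _ => False)); auto.
  - intros r1 r2 E N1. destruct (frag_path_node _ _ _ r1 r2 Hr E N1) as [fm [H1 H2]].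
    destruct H2 as [Hl [Hlabs Htrue]].
    exists fm, Awake. rewrite Hg, H1 by auto. repeat split; auto.
  - intros t [].
  - eapply grafted_leaf; eauto. apply T_real.
Qed.

Lemma realizes_graft_fresh ls r v y : grafted T' l ls -> ~ lab T l v ->
  match v with
  | L0 => True
  | LR s _ => lab T l s /\ Rw M (f s) y
  | LS s q _ => lab T l s /\ lab T l q /\ Sw M (f q) (f s) y
  end ->
  frag_path (fun fm => fst fm = v /\ (forall u, elabels (snd fm) u -> lab T l u) /\
                       eforces M V f y (snd fm)) ls r ->
  realizable_below M V T' l.
Proof.
  intros Hg Nv Hv Hr.
  set (f' := fun u => if label_eq_dec u v then y else f u).
  assert (Hag : forall u, lab T l u -> f' u = f u).
  { intros u Hu. unfold f'. destruct (label_eq_dec u v); subst; tauto. }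
  assert (Hfv : f' v = y) by (unfold f'; destruct (label_eq_dec v v); congruence).
  exists (l ++ r), f'. split; [|apply prefix_app].
  apply (realizes_extension M V T T' l r f f' (fun t => t = v)); auto.
  - intros r1 r2 E N1.
    destruct (frag_path_node _ _ _ r1 r2 Hr E N1) as [fm [H1 [H2 [H3 H4]]]].
    exists fm, Awake. rewrite Hg, H1 by auto. repeat split; auto.
    rewrite H2, Hfv. apply (eforces_agree M V f f'); auto.
    intros u Hu; symmetry; apply Hag, H3, Hu.
  - intros t ->. destruct v as [|s n|s q n]; auto.
    + destruct Hv as [Hs Hr']. split; auto. rewrite Hfv, Hag; auto.
    + destruct Hv as [Hs [Hq Hr']]. repeat split; auto. rewrite Hfv, !Hag; auto.
  - eapply grafted_leaf; eauto. apply T_real.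
Qed.

Variables (C : horn -> Prop) (s : label).
Hypothesis M_sat : frame_sat_C M C.
Hypothesis s_lab : lab T l s.

Lemma realizes_neg_rule B ls : grafted T' l ls ->
  (forall u, elabels B u -> lab T l u) -> ~ eforces M V f (f s) B ->
  leaf_levels C T l s (ENeg B) ls -> realizable_below M V T' l.
Proof.
  intros Hg HB Ht Hlev.
  destruct B as [p|B|B D|B|q B|B D]; simpl in Hlev, Ht, HB.
  - subst ls. apply (realizes_graft_old _ Hg). exists []; exact I.
  - subst ls. apply (realizes_graft_old _ Hg). exists [0].
    eexists; split; [reflexivity|]. repeat split; auto. apply NNPP; auto.
  - subst ls. apply (realizes_graft_old _ Hg). exists [0; 0].
    eexists; split; [reflexivity|]. split; [repeat split; auto; apply NNPP; tauto|].
    eexists; split; [reflexivity|]. split; [repeat split; auto; tauto|exact I].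
  - destruct Hlev as [k [[Hk _] ->]].
    destruct (neg_box_witness M V f _ B Ht) as [y [Hy1 [Hy2 Hy3]]].
    apply (realizes_graft_fresh _ [0; 0] (LR s k) y Hg); auto.
    eexists; split; [reflexivity|]. split; [repeat split; auto|].
    eexists; split; [reflexivity|]. split; [repeat split; auto|exact I].
  - destruct Hlev as [k [[Hk _] ->]].
    destruct (neg_boxl_witness M V f q _ B Ht) as [y [Hy1 [Hy2 Hy3]]].
    apply (realizes_graft_fresh _ [0; 0] (LS s q k) y Hg); auto.
    eexists; split; [reflexivity|]. split; [repeat split; auto|].
    eexists; split; [reflexivity|]. split; [repeat split; auto|exact I].
  - destruct Hlev as [k [[Hk _] ->]].
    destruct (neg_rhd_witness M V f _ B D Ht) as [y [Hy1 [Hy2 [Hy3 Hy4]]]].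
    apply (realizes_graft_fresh _ [0; 0; 0] (LR s k) y Hg); auto.
    eexists; split; [reflexivity|]. split; [repeat split; auto|].
    eexists; split; [reflexivity|]. split; [repeat split; auto; intros u [->|Hu]; auto|].
    eexists; split; [reflexivity|]. split; [repeat split; auto|exact I].
Qed.

Lemma realizes_rule A ls : grafted T' l ls ->
  (forall u, elabels A u -> lab T l u) -> eforces M V f (f s) A ->
  leaf_levels C T l s A ls -> realizable_below M V T' l.
Proof.
  intros Hg HA Ht Hlev.
  assert (SR : forall t, LabR C (lab T l) s t -> Rw M (f s) (f t))
    by (intros t; apply (LRel_sound _ _ _ _ _ M_sat (realizes_creation _ _ _ _ _ T_real))).
  assert (SS : forall q t, LabS C (lab T l) q s t -> Sw M (f q) (f s) (f t))
    by (intros q t; apply (LRel_sound _ _ _ _ _ M_sat (realizes_creation _ _ _ _ _ T_real))).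
  destruct A as [p|B|B D|B|q B|B D]; simpl in Hlev, Ht, HA.
  - subst ls. apply (realizes_graft_old _ Hg). exists []; exact I.
  - apply (realizes_neg_rule B ls); auto.
  - subst ls. apply (realizes_graft_old _ Hg).
    destruct (classic (eforces M V f (f s) B)) as [HB|HB];
      [exists [1]|exists [0]]; eexists; (split; [reflexivity|]); repeat split; auto.
  - destruct Hlev as [ts [[_ Hts] ->]]. apply (realizes_graft_old _ Hg).
    apply frag_path_map. intros t Hin. apply Hts in Hin. destruct Hin as [Hl Hr].
    exists 0; eexists; split; [reflexivity|]. repeat split; auto.
  - destruct Hlev as [ts [[_ Hts] ->]]. apply (realizes_graft_old _ Hg).
    apply frag_path_map. intros t Hin. apply Hts in Hin. destruct Hin as [Hl Hr].
    exists 0; eexists; split; [reflexivity|]. repeat split; auto.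
  - destruct Hlev as [ts [[_ Hts] ->]]. apply (realizes_graft_old _ Hg).
    apply frag_path_map. intros t Hin. apply Hts in Hin. destruct Hin as [Hl Hr].
    destruct (classic (eforces M V f (f t) B)) as [HB|HB].
    + exists 1; eexists; split; [reflexivity|]. repeat split; auto.
      * intros u [->|Hu]; auto.
      * destruct (Ht (f t) (SR t Hr) HB) as [z [Hz1 Hz2]]. intro Hc; apply (Hc z Hz1 Hz2).
    + exists 0; eexists; split; [reflexivity|]. repeat split; auto.
Qed.

End GraftRealizes.

Lemma step_extends C T T' : step C T T' -> extends T T'.
Proof.
  intros [[_ Heq]|[n [s [A [fr [_ [_ [_ [Hpres _]]]]]]]]] a fm st H.
  - rewrite Heq; eauto.
  - destruct (Hpres a fm st H) as [st' [H' _]]; eauto.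
Qed.

(* An idle step is a graft at no leaf. *)
Lemma step_graft C T T' : step C T T' ->
  exists Pr fr, (forall l, Pr l -> leaf T l) /\ (forall l, Pr l -> grafted T' l (fr l)) /\
    only_grafts T T' Pr.
Proof.
  intros [[_ Heq]|[n [s [A [fr [_ [_ [_ [_ [Hnew Hnone]]]]]]]]]].
  - exists (fun _ => False), (fun _ => []). repeat split; try contradiction.
    intros a Ha _. rewrite Heq; auto.
  - exists (processed T n A), fr. split; [|split].
    + intros l [H _]; exact H.
    + intros l Hl r Hr; apply Hnew; auto.
    + exact Hnone.
Qed.

Lemma step_shape C T T' : step C T T' -> prefix_closed T -> child0_closed T ->
  prefix_closed T' /\ child0_closed T'.
Proof.
  intros Hs HPC HJ. pose proof (step_extends _ _ _ Hs) as Hext.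
  destruct (step_graft _ _ _ Hs) as [Pr [fr [Hleaf [Hg Honly]]]].
  split; [eapply graft_prefix_closed|eapply graft_child0_closed]; eauto.
Qed.

Lemma realizable_ungrafted M V T T' Pr l f : prefix_closed T -> child0_closed T ->
  (forall l, Pr l -> leaf T l) -> extends T T' -> only_grafts T T' Pr ->
  realizes M V T l f -> ~ Pr l -> realizable_below M V T' l.
Proof.
  intros HPC HJ Hleaf Hext Honly HI Np. exists (l ++ []), f.
  split; [|apply prefix_app].
  apply (realizes_extension M V T T' l [] f f (fun _ => False)); auto.
  - intros [|] r2 E N; [congruence|discriminate E].
  - intros t [].
  - rewrite app_nil_r. apply (ungrafted_leaf T T' Pr); auto. apply HI.
Qed.

Lemma step_realizes M V C T T' l f : frame_sat_C M C -> prefix_closed T ->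
  child0_closed T -> step C T T' -> realizes M V T l f -> realizable_below M V T' l.
Proof.
  intros Hsat HPC HJ Hs HI. pose proof (step_extends _ _ _ Hs) as Hext.
  destruct Hs as [[_ Heq]|[n [s [A [fr [_ [Hn [Hlev [_ [Hnew Hnone]]]]]]]]]].
  - apply (realizable_ungrafted M V T T' (fun _ => False) l f); auto; try contradiction.
    intros a Ha _. rewrite Heq; auto.
  - destruct (classic (processed T n A l)) as [Hpr|Hpr];
      [|apply (realizable_ungrafted M V T T' (processed T n A) l f); auto;
        intros l' [H _]; exact H].
    assert (Hnl : prefix n l) by apply Hpr.
    assert (Hfn : formula_at T n (s, A)) by (exists Awake; auto).
    apply (realizes_rule M V T T' l f HPC HI Hext C s Hsat) with A (fr l).
    + exists n, A; auto.
    + intros r; apply Hnew; auto.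
    + eapply realizes_labels; eauto.
    + eapply realizes_true; eauto.
    + auto.
Qed.

Lemma init_defined G a : defined (init_tree G) a <->
  forallb (fun x => Nat.eqb x 0) a = true /\ length a < length G.
Proof.
  unfold defined, init_tree. destruct (forallb _ a).
  - destruct (nth_error G (length a)) eqn:E.
    + split; [intros _; split; auto|intros _; eexists; eauto].
      apply nth_error_Some; congruence.
    + split; [intros [y Hy]; discriminate|intros [_ H]].
      apply nth_error_Some in H; congruence.
  - split; [intros [y Hy]; discriminate|intros [H _]; discriminate].
Qed.

Lemma init_prefix_closed G : prefix_closed (init_tree G).
Proof.
  intros a b H. apply init_defined in H. apply init_defined.
  rewrite forallb_app, length_app in H. destruct H as [H1 H2].
  apply andb_prop in H1. split; [tauto|lia].
Qed.

Lemma init_child0_closed G : child0_closed (init_tree G).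
Proof.
  intros a [|y c] Nc H; [congruence|]. apply init_defined in H. apply init_defined.
  rewrite forallb_app, length_app in *. destruct H as [H1 H2].
  apply andb_prop in H1. destruct H1 as [-> _]. simpl in *. split; auto; lia.
Qed.

Lemma init_formula_at G a t e : formula_at (init_tree G) a (t, e) ->
  t = L0 /\ exists A, e = embed A /\ In A G.
Proof.
  intros [st H]. unfold init_tree in H. destruct (forallb _ a); [|discriminate].
  destruct (nth_error G (length a)) eqn:E; [|discriminate].
  injection H as <- <- _. split; auto. eexists; split; eauto. eapply nth_error_In; eauto.
Qed.

Lemma forallb_repeat_0 k : forallb (fun x => Nat.eqb x 0) (repeat 0 k) = true.
Proof. induction k; simpl; auto. Qed.

Lemma init_realizes M V G x : G <> [] -> (forall A, In A G -> forces M V x A) ->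
  realizes M V (init_tree G) (repeat 0 (pred (length G))) (fun _ => x).
Proof.
  intros HG Hx. assert (Hlen : length G > 0) by (destruct G; simpl; [congruence|lia]).
  split; [split| | |].
  - apply init_defined. rewrite forallb_repeat_0, repeat_length. split; auto; lia.
  - unfold init_tree. destruct (forallb _ _); auto.
    rewrite length_app, repeat_length. simpl.
    replace (pred (length G) + 1) with (length G) by lia.
    rewrite (proj2 (nth_error_None _ _)); auto.
  - intros a t e _ Ha. destruct (init_formula_at _ _ _ _ Ha) as [-> [A [-> HA]]].
    apply eforces_embed; auto.
  - intros a t e _ Ha u Hu. destruct (init_formula_at _ _ _ _ Ha) as [-> [A [-> HA]]].
    exfalso; eapply elabels_embed; eauto.
  - intros t [a [e [_ Ha]]]. destruct (init_formula_at _ _ _ _ Ha) as [-> _]. exact I.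
Qed.

Lemma dependent_choice {X : Type} (I : nat -> X -> Prop) (Rl : X -> X -> Prop) :
  (exists x0, I 0 x0) -> (forall i x, I i x -> exists y, I (S i) y /\ Rl x y) ->
  exists sq : nat -> X, (forall i, I i (sq i)) /\ (forall i, Rl (sq i) (sq (S i))).
Proof.
  intros [x0 H0] Hs.
  set (next := fun i x => epsilon (inhabits x0) (fun y => I (S i) y /\ Rl x y)).
  set (sq := fix sq (i : nat) : X :=
         match i with 0 => x0 | S k => next k (sq k) end).
  assert (Hnext : forall i x, I i x -> I (S i) (next i x) /\ Rl x (next i x)).
  { intros i x Hx. apply (epsilon_spec (inhabits x0) (fun y => I (S i) y /\ Rl x y)), Hs, Hx. }
  assert (HI : forall i, I i (sq i)) by (induction i; simpl; [auto|apply Hnext; auto]).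
  exists sq; split; auto. intros i. apply Hnext, HI.
Qed.

Lemma prefix_chain_mono (ls : nat -> list nat) :
  (forall i, prefix (ls i) (ls (S i))) -> forall i j, i <= j -> prefix (ls i) (ls j).
Proof.
  intros Hs i j Hij; induction Hij; [apply prefix_refl|eapply prefix_trans; eauto].
Qed.

Section Systematic.

Variables (C : horn -> Prop) (G : list formula) (T : nat -> tree).
Hypothesis T_sys : systematic_tableau C G T.

Lemma systematic_shape i : prefix_closed (T i) /\ child0_closed (T i).
Proof.
  destruct T_sys as [H0 Hst]. induction i as [|i [HPC HJ]].
  - rewrite H0; split; [apply init_prefix_closed|apply init_child0_closed].
  - apply (step_shape C (T i)); auto.
Qed.

Lemma systematic_extends i j : i <= j -> extends (T i) (T j).
Proof.
  intros Hij. induction Hij; [intros a fm st H; eauto|].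
  intros a fm st H. destruct (IHHij a fm st H) as [st' H'].
  apply (step_extends C _ _ (proj2 T_sys m) _ _ _ H').
Qed.

Lemma systematic_empty : G = [] -> union_branch T (fun _ => False).
Proof.
  intros ->. destruct T_sys as [H0 Hst].
  assert (Hnone : forall i a, T i a = None).
  { induction i; intro a.
    - rewrite H0. unfold init_tree. destruct (forallb _ a); auto. destruct (length a); auto.
    - destruct (Hst i) as [[_ Heq]|[n [s [A [fr [[[fm Haw] _] _]]]]]].
      + rewrite Heq; auto.
      + rewrite IHi in Haw; discriminate. }
  repeat split; try contradiction.
  intros a [i [y Hy]] _. rewrite Hnone in Hy; discriminate.
Qed.

Section Chain.

Variables (M : ILframe) (V : nat -> W M -> Prop).
Variables (ls : nat -> list nat) (fs : nat -> label -> W M).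
Hypothesis chain_realizes : forall i, realizes M V (T i) (ls i) (fs i).
Hypothesis chain_grows : forall i, prefix (ls i) (ls (S i)).

Lemma chain_union_branch : union_branch T (fun a => exists i, prefix a (ls i)).
Proof.
  pose proof (prefix_chain_mono ls chain_grows) as Hmono.
  split; [|split; [|split]].
  - intros a [i [c Hc]]. exists i. apply (proj1 (systematic_shape i) a c).
    rewrite <- Hc. apply chain_realizes.
  - intros a b [i Hb] Hab. exists i; eapply prefix_trans; eauto.
  - intros a b [i Ha] [j Hb]. apply prefix_total with (ls (max i j)).
    + eapply prefix_trans; [exact Ha|apply Hmono; lia].
    + eapply prefix_trans; [exact Hb|apply Hmono; lia].
  - intros a [j Hd] Hc. apply NNPP; intro Na.
    destruct (Hc (ls j) (ex_intro _ j (prefix_refl _))) as [H|[[|y c] Ec]].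
    + apply Na; exists j; auto.
    + apply Na; exists j. rewrite Ec, app_nil_r. apply prefix_refl.
    + destruct (chain_realizes j) as [[_ Hnone] _ _ _].
      destruct (proj2 (systematic_shape j) (ls j) (y :: c)) as [z Hz];
        [discriminate|rewrite <- Ec; auto|congruence].
Qed.

Lemma chain_open : ~ branch_closed T (fun a => exists i, prefix a (ls i)).
Proof.
  intros [a [b [s [e [[i1 Ha] [[i2 Hb] [[k1 [st1 Hf1]] [k2 [st2 Hf2]]]]]]]]].
  set (K := max (max i1 i2) (max k1 k2)).
  pose proof (prefix_chain_mono ls chain_grows) as Hmono.
  destruct (systematic_extends k1 K ltac:(lia) _ _ _ Hf1) as [st1' Hf1'].
  destruct (systematic_extends k2 K ltac:(lia) _ _ _ Hf2) as [st2' Hf2'].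
  assert (HaK : prefix a (ls K)) by (eapply prefix_trans; [exact Ha|apply Hmono; lia]).
  assert (HbK : prefix b (ls K)) by (eapply prefix_trans; [exact Hb|apply Hmono; lia]).
  pose proof (realizes_true _ _ _ _ _ (chain_realizes K) a s e HaK (ex_intro _ _ Hf1')).
  pose proof (realizes_true _ _ _ _ _ (chain_realizes K) b s (ENeg e) HbK
                (ex_intro _ _ Hf2')).
  contradiction.
Qed.

End Chain.

Lemma systematic_realized_chain M V x : frame_sat_C M C -> G <> [] ->
  (forall A, In A G -> forces M V x A) ->
  exists ls fs, (forall i, realizes M V (T i) (ls i) (fs i)) /\
                (forall i, prefix (ls i) (ls (S i))).
Proof.
  intros Hsat HG Hx.
  destruct (dependent_choice (fun i p => realizes M V (T i) (fst p) (snd p))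
              (fun p q => prefix (fst p) (fst q))) as [sq [HI Hm]].
  - exists (repeat 0 (pred (length G)), fun _ => x). simpl.
    rewrite (proj1 T_sys). apply init_realizes; auto.
  - intros i [l f] H. destruct (systematic_shape i) as [HPC HJ].
    destruct (step_realizes M V C (T i) (T (S i)) l f Hsat HPC HJ (proj2 T_sys i) H)
      as [l' [f' [H1 H2]]].
    exists (l', f'); auto.
  - exists (fun i => fst (sq i)), (fun i => snd (sq i)); auto.
Qed.

End Systematic.

Theorem mainTheorem3 (X : formula -> Prop) (C : horn -> Prop)
  (G : list formula) (T : nat -> tree) :
  is_Horn X C ->
  systematic_tableau C G T ->
  tableau_closes T ->
  ~ (exists (M : ILframe) (V : nat -> W M -> Prop) (x : W M),
       frame_sat_C M C /\ forall A, In A G -> forces M V x A).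
Proof.
  intros _ Hsys Hcl [M [V [x [Hsat Hx]]]].
  destruct (classic (G = [])) as [HG|HG].
  - destruct (Hcl _ (systematic_empty C G T Hsys HG)) as [a [_ [_ [_ [[] _]]]]].
  - destruct (systematic_realized_chain C G T Hsys M V x Hsat HG Hx)
      as [ls [fs [Hreal Hgrow]]].
    apply (chain_open C G T Hsys M V ls fs Hreal Hgrow).
    apply Hcl, (chain_union_branch C G T Hsys M V ls fs Hreal Hgrow).
Qed.
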